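(* Let $G$ be a path-pairable graph on $n$ vertices with diameter $d \geq 20$. Then $d \leq 6\sqrt{2}\cdot\sqrt{n}$.
   Context: A graph $G$ on $n=2m$ vertices is path-pairable if for every partition of its vertex set into $m$ pairs $\{x_1,y_1\},\dots,\{x_m,y_m\}$ there exist pairwise edge-disjoint paths $P_1,\dots,P_m$ such that $P_i$ joins $x_i$ to $y_i$ for each $i$. The diameter of $G$ is the maximum distance between two vertices of $G$. *)

From mathcomp Require Import all_boot all_order all_algebra.
Set Implicit Arguments. Unset Strict Implicit. Unset Printing Implicit Defensive.

Definition simple_graph (T : finType) (e : rel T) : Prop :=
  symmetric e /\ irreflexive e.

Definition walk_of_length (T : finType) (e : rel T) (x y : T) (k : nat) : Prop :=
  exists s : seq T, [/\ path e x s, last x s = y & size s = k].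

Definition dist_le (T : finType) (e : rel T) (x y : T) (k : nat) : Prop :=
  exists2 j, j <= k & walk_of_length e x y j.

Definition is_diameter (T : finType) (e : rel T) (d : nat) : Prop :=
  (forall x y : T, dist_le e x y d) /\
  (exists x y : T, forall k, walk_of_length e x y k -> d <= k).

Definition path_edges (T : finType) (x : T) (s : seq T) : seq {set T} :=
  pairmap (fun a b => [set a; b]) x s.

(* A partition of the vertex set into pairs, encoded as a fixed-point-free
   involution p (the pairs are {x, p x}). *)
Definition pairing (T : finType) (p : T -> T) : Prop :=
  forall x, p (p x) = x /\ p x != x.

(* Path-pairable: n = #|T| is even, and for every pairing there are paths
   P x from x to p x (one for each of the two endpoints of a pair; it suffices
   that they exist), such that paths belonging to different pairs are
   edge-disjoint. *)
Definition path_pairable (T : finType) (e : rel T) : Prop :=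
  ~~ odd #|T| /\
  forall p : T -> T, pairing p ->
    exists P : T -> seq T,
      (forall x, [/\ path e x (P x), last x (P x) = p x & uniq (x :: P x)]) /\
      (forall x y, y != x -> y != p x ->
         ~~ has (fun E => E \in path_edges x (P x)) (path_edges y (P y))).

(* Cut S off by a pairing sending every vertex of S outside S (possible when
   |S| <= n/2): each path leaving S uses an edge of the boundary of S, and
   paths of distinct pairs share no edge, so the edge boundary of S has at
   least |S| edges. For the balls B_i around a vertex this boundary lies
   between the distance layers L_i and L_(i+1), whence
   |B_i| <= |L_i| |L_(i+1)| as long as |B_i| <= n/2, and the balls
   grow quadratically: |B_(2k)| > k^2. Applying this to balls of radius
   about d/2 around both ends of a diametral pair, which are disjoint, gives
   2 (d/12)^2 < n, i.e. d^2 <= 72 n. *)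
From mathcomp Require Import all_boot all_order all_algebra zify.

Set Implicit Arguments.
Unset Strict Implicit.
Unset Printing Implicit Defensive.

Lemma quadratic_growth (n : nat) (S a : nat -> nat) :
  (0 < S 0)%N ->
  (forall i, S i.+1 = S i + a i.+1)%N ->
  (forall i, 2 * S i <= n -> S i <= a i * a i.+1)%N ->
  forall k, (2 * S (2 * k) <= n -> k * k < S (2 * k))%N.
Proof.
move=> S0 S_succ S_cut; elim=> [|k IHk] small; first by rewrite muln0.
have E : (2 * k.+1 = (2 * k).+2)%N by lia.
rewrite E !S_succ in small *.
set s := S (2 * k) in IHk small *; set a1 := a _ in small *; set a2 := a _ in small *.
have IH := IHk ltac:(lia).
have cut : (s + a1 <= a1 * a2)%N by rewrite -S_succ; apply: S_cut; rewrite S_succ; lia.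
(* AM-GM: [4 a1 a2 <= (a1 + a2)^2], so [a1 + a2 > 2 k] *)
have amgm : (4 * (a1 * a2) <= (a1 + a2) * (a1 + a2))%N.
  by have [+ _] := nat_AGM2 a1 a2; rewrite expnS expn1.
nia.
Qed.

Lemma modn_add_half (h i : nat) : (i < h + h)%N ->
  ((i + h) %% (h + h) = if i < h then i + h else i - h)%N.
Proof.
move=> ilt; case: ltnP => hi; first by rewrite modn_small //; lia.
have -> : (i + h = (i - h) + (h + h))%N by lia.
by rewrite modnDr modn_small //; lia.
Qed.

(* List S first, then its complement, and pair the two halves of the list. *)
Lemma exists_pairing_out (T : finType) (S : {set T}) :
  ~~ odd #|T| -> (2 * #|S| <= #|T|)%N ->
  exists p : T -> T, pairing p /\ forall x, x \in S -> p x \notin S.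
Proof.
move=> evenT smallS.
set s := enum S ++ enum (~: S); set h := #|T|./2.
have n_eq : #|T| = (h + h)%N by rewrite addnn -[LHS]odd_double_half (negbTE evenT).
have size_s : size s = #|T| by rewrite size_cat -!cardE cardsC.
have uniq_s : uniq s.
  rewrite cat_uniq !enum_uniq andbT /=; apply/hasPn => x.
  by rewrite !mem_enum inE => /negbTE ->.
have mem_s x : x \in s by rewrite mem_cat !mem_enum inE orbN.
have idx_lt x : (index x s < h + h)%N by rewrite -n_eq -size_s index_mem.
have idx_S x : x \in S -> (index x s < #|S|)%N.
  by move=> xS; rewrite index_cat mem_enum xS cardE index_mem mem_enum.
pose p x := nth x s ((index x s + h) %% (h + h)).
have idx_p x : index (p x) s = ((index x s + h) %% (h + h))%N.
  by rewrite index_uniq // size_s n_eq ltn_pmod //; have := idx_lt x; lia.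
have rotK i : (i < h + h -> ((i + h) %% (h + h) + h) %% (h + h) = i)%N.
  move=> ilt; rewrite (modn_add_half ilt) modn_add_half.
  - by case: (ltnP i h) => hi /=; case: ifP; lia.
  - by case: (ltnP i h); lia.
exists p; split.
  move=> x; split; first by rewrite /p idx_p rotK // nth_index.
  apply/eqP => /(congr1 (index^~ s)); rewrite idx_p modn_add_half //.
  by have := idx_lt x; case: (ltnP (index x s) h); lia.
move=> x xS; apply/negP => pxS.
have := idx_S _ pxS; rewrite idx_p modn_add_half //.
by have := idx_S _ xS; case: (ltnP (index x s) h); lia.
Qed.

Definition edge_boundary (T : finType) (e : rel T) (S : {set T}) : {set T * T} :=
  [set u | [&& e u.1 u.2, u.1 \in S & u.2 \notin S]].

Lemma path_leaves_set (T : finType) (e : rel T) (S : {set T}) (x : T) (s : seq T) :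
  path e x s -> x \in S -> last x s \notin S ->
  exists u w, [/\ (u, w) \in edge_boundary e S & [set u; w] \in path_edges x s].
Proof.
elim: s x => [|y s IHs] x /=; first by move=> _ ->.
move=> /andP[exy pys] xS lastS.
case: (boolP (y \in S)) => yS.
  have [u [w [uw_bd uw_path]]] := IHs y pys yS lastS.
  by exists u, w; rewrite /path_edges /= -/(path_edges y s) in_cons uw_path orbT.
by exists x, y; rewrite in_cons eqxx inE /= exy xS yS.
Qed.

Lemma path_pairable_edge_boundary (T : finType) (e : rel T) (S : {set T}) :
  path_pairable e -> (2 * #|S| <= #|T|)%N -> (#|S| <= #|edge_boundary e S|)%N.
Proof.
move=> [evenT pp] smallS.
have [p [p_pairing p_out]] := exists_pairing_out evenT smallS.
have [P [P_path P_disj]] := pp p p_pairing.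
pose cut := [set [set u.1; u.2] | u in edge_boundary e S].
pose c x := odflt set0 [pick E in cut | E \in path_edges x (P x)].
have c_cut x : x \in S -> c x \in cut /\ c x \in path_edges x (P x).
  move=> xS; rewrite /c; case: pickP => [E /andP[]//|no_cut_edge].
  have [Px_path Px_last _] := P_path x.
  have Px_out : last x (P x) \notin S by rewrite Px_last p_out.
  have [u [w [uw_bd uw_path]]] := path_leaves_set Px_path xS Px_out.
  have := no_cut_edge [set u; w]; rewrite uw_path andbT.
  by rewrite (imset_f (fun u => [set u.1; u.2]) uw_bd).
have c_inj : {in S &, injective c}.
  move=> x y xS yS cxy; apply/eqP; rewrite eq_sym; apply/negPn/negP => yx.
  have ypx : y != p x by apply: contraTneq (p_out x xS) => <-; rewrite yS.
  have /hasP := P_disj x y yx ypx; apply; exists (c y).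
    exact: (c_cut y yS).2.
  by rewrite -cxy; exact: (c_cut x xS).2.
rewrite -(card_in_imset c_inj); apply: leq_trans (leq_imset_card _ _).
by apply/subset_leq_card/subsetP => E /imsetP[x xS ->]; exact: (c_cut x xS).1.
Qed.

Definition walk_of_lengthb (T : finType) (e : rel T) (x y : T) (k : nat) : bool :=
  [exists t : k.-tuple T, path e x t && (last x t == y)].

Lemma walk_of_lengthP (T : finType) (e : rel T) (x y : T) (k : nat) :
  reflect (walk_of_length e x y k) (walk_of_lengthb e x y k).
Proof.
apply: (iffP existsP) => [[t /andP[pt /eqP lt]] | [s [ps ls ss]]].
  by exists (tval t); rewrite size_tuple.
have sz : size s == k by rewrite ss.
by exists (Tuple sz); rewrite /= ps ls eqxx.
Qed.

Section Distance.

Variables (T : finType) (e : rel T) (x0 : T).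
Hypothesis connected : forall v, exists k, walk_of_length e x0 v k.

Lemma exists_walk_of_lengthb (v : T) : exists k, walk_of_lengthb e x0 v k.
Proof. by have [k /walk_of_lengthP] := connected v; exists k. Qed.

Definition dist (v : T) : nat := ex_minn (exists_walk_of_lengthb v).

Lemma dist_walk (v : T) : walk_of_length e x0 v (dist v).
Proof. by apply/walk_of_lengthP; rewrite /dist; case: ex_minnP. Qed.

Lemma dist_min (v : T) (k : nat) : walk_of_length e x0 v k -> (dist v <= k)%N.
Proof. by move/walk_of_lengthP; rewrite /dist; case: ex_minnP => m _ min_m /min_m. Qed.

Lemma dist_root : dist x0 = 0%N.
Proof. by apply/eqP; rewrite -leqn0; apply: dist_min; exists [::]. Qed.

Lemma dist_edge (u w : T) : e u w -> (dist w <= (dist u).+1)%N.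
Proof.
move=> euw; apply: dist_min; have [s [ps ls ss]] := dist_walk u.
by exists (rcons s w); rewrite rcons_path ps ls euw last_rcons size_rcons ss.
Qed.

End Distance.

Section BallGrowth.

Variables (T : finType) (e : rel T) (f : T -> nat).
Hypothesis f_edge : forall u w, e u w -> (f w <= (f u).+1)%N.

Lemma card_ball_succ (i : nat) :
  #|[set v | f v <= i.+1]| = (#|[set v | f v <= i]| + #|[set v | f v == i.+1]|)%N.
Proof.
rewrite -(cardsID [set v | f v <= i]).
by congr (_ + _)%N; apply: eq_card => v; rewrite !inE; lia.
Qed.

Lemma edge_boundary_ball (i : nat) :
  edge_boundary e [set v | f v <= i] \subset
  setX [set v | f v == i] [set v | f v == i.+1].
Proof.
apply/subsetP => -[u w]; rewrite !inE /= -ltnNge => /and3P[euw fu fw].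
by have := f_edge euw; rewrite !eqn_leq fu fw; lia.
Qed.

Lemma ball_growth (x0 : T) (k : nat) : path_pairable e -> f x0 = 0%N ->
  (2 * #|[set v | f v <= 2 * k]| <= #|T| -> k * k < #|[set v | f v <= 2 * k]|)%N.
Proof.
move=> pp fx0; move: k.
apply: (quadratic_growth (S := fun i => #|[set v | f v <= i]|)
                         (a := fun i => #|[set v | f v == i]|)).
- by apply/card_gt0P; exists x0; rewrite inE fx0.
- exact: card_ball_succ.
move=> i small; rewrite -cardsX; apply: leq_trans (subset_leq_card (edge_boundary_ball i)).
exact: path_pairable_edge_boundary.
Qed.

End BallGrowth.

Lemma path_pairable_diameter_sq (T : finType) (e : rel T) (d : nat) :
  symmetric e -> path_pairable e -> is_diameter e d -> (5 <= d)%N ->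
  (d * d <= 72 * #|T|)%N.
Proof.
move=> sym_e pp [diam_le [x0 [y0 far]]] d_ge5.
have conn v : exists k, walk_of_length e x0 v k.
  by have [j _ w] := diam_le x0 v; exists j.
pose D := dist conn.
have D_le v : (D v <= d)%N.
  by have [j jd w] := diam_le x0 v; exact: leq_trans (dist_min conn w) jd.
have D_y0 : D y0 = d by apply/eqP; rewrite eqn_leq D_le; apply/far/dist_walk.
have coD_edge u w : e u w -> (d - D w <= (d - D u).+1)%N.
  by rewrite sym_e => /(dist_edge conn); rewrite -/D; lia.
(* This [k] keeps the balls of radius [2 k] around [x0] and [y0] disjoint
   and satisfies [d <= 12 k]. *)
pose k := (d.-1 %/ 4)%N.
have growth_x0 := ball_growth (dist_edge conn) (k := k) pp (dist_root conn).
have coD_y0 : (d - D y0 = 0)%N by rewrite D_y0 subnn.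
have growth_y0 := ball_growth coD_edge (k := k) pp coD_y0.
have disjoint_balls :
    (#|[set v | D v <= 2 * k]| + #|[set v | d - D v <= 2 * k]| <= #|T|)%N.
  rewrite -cardsUI (_ : _ :&: _ = set0) ?cards0 ?addn0 ?max_card //.
  by apply/setP => v; rewrite !inE; have := D_le v; rewrite /k; lia.
have : (2 * (k * k) < #|T|)%N by move: growth_x0 growth_y0 disjoint_balls; rewrite -/D; lia.
have : (d <= 12 * k)%N by rewrite /k; lia.
nia.
Qed.

Import Order.TTheory GRing.Theory Num.Theory.
Local Open Scope ring_scope.

Lemma ler_nat_sqrt (R : rcfType) (d m : nat) :
  (d * d <= m)%N -> (d%:R : R) <= Num.sqrt m%:R.
Proof.
by move=> dd; rewrite -[d%:R]ger0_norm // -sqrtr_sqr ler_sqrt // -natrX ler_nat -mulnn.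
Qed.

Theorem theorem1 (R : rcfType) (T : finType) (e : rel T) (d : nat) :
  simple_graph e -> path_pairable e -> is_diameter e d -> (20 <= d)%N ->
  (d%:R : R) <= 6 * Num.sqrt 2 * Num.sqrt (#|T|%:R).
Proof.
move=> [sym_e _] pp diam d_ge20.
have -> : 6 * Num.sqrt 2 * Num.sqrt #|T|%:R = Num.sqrt (72 * #|T|)%N%:R :> R.
  rewrite natrM (_ : 72 = 6 ^+ 2 * 2 :> R); last by rewrite -natrX -natrM.
  by rewrite sqrtrM ?mulr_ge0 ?sqr_ge0 // sqrtrM ?sqr_ge0 // sqrtr_sqr ger0_norm.
by apply/ler_nat_sqrt/path_pairable_diameter_sq => //; apply: leq_trans d_ge20.
Qed.
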